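(* Let $r\ge 1$, let $a_1,\dots,a_r\ge 2$ be integers, and let $G,H,H_1,\dots,H_r$ be graphs. If $G \rightarrow (a_1,\dots,a_r)^v$ and $H \rightarrow (H_1,\dots,H_r)^v$, then $G[H] \rightarrow (K_{a_1}[H_1],\dots,K_{a_r}[H_r])^v$.
   Context: All graphs are finite and simple. ''A graph $F$ contains a graph $H$'' means $F$ has a (not necessarily induced) subgraph isomorphic to $H$. An integer $a$ used in place of a graph denotes the complete graph $K_a$. For graphs $G,H_1,\dots,H_r$ write $G\rightarrow(H_1,\dots,H_r)^v$ if for every partition $V(G)=X_1\cup\dots\cup X_r$ (i.e. every $r$-coloring of the vertices) there is an $i$ such that the subgraph of $G$ induced by $X_i$ contains $H_i$. The lexicographic product $G[H]$ has vertex set $V(G)\times V(H)$, with $\{(u_1,v_1),(u_2,v_2)\}$ an edge iff $\{u_1,u_2\}\in E(G)$, or $u_1=u_2$ and $\{v_1,v_2\}\in E(H)$. *)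

From mathcomp Require Import all_boot.
Set Implicit Arguments. Unset Strict Implicit. Unset Printing Implicit Defensive.

Record sgraph := SGraph {
  vert :> finType;
  adj : rel vert;
  adj_sym : symmetric adj;
  adj_irr : irreflexive adj }.

Definition Kadj (a : nat) : rel 'I_a := fun i j => i != j.
Lemma Kadj_sym a : symmetric (@Kadj a).
Proof. by move=> i j; rewrite /Kadj eq_sym. Qed.
Lemma Kadj_irr a : irreflexive (@Kadj a).
Proof. by move=> i; rewrite /Kadj eqxx. Qed.
Definition complete (a : nat) : sgraph := SGraph (@Kadj_sym a) (@Kadj_irr a).

Definition lexadj (G H : sgraph) : rel (G * H)%type :=
  fun u v => adj u.1 v.1 || ((u.1 == v.1) && adj u.2 v.2).
Lemma lexadj_sym G H : symmetric (@lexadj G H).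
Proof. by move=> u v; rewrite /lexadj adj_sym eq_sym (adj_sym u.2). Qed.
Lemma lexadj_irr G H : irreflexive (@lexadj G H).
Proof. by move=> u; rewrite /lexadj !adj_irr andbF. Qed.
Definition lexprod (G H : sgraph) : sgraph :=
  SGraph (@lexadj_sym G H) (@lexadj_irr G H).

(* the subgraph of F induced by X contains H: an injective edge-preserving
   map from H into X (not necessarily induced copy) *)
Definition contains_in (F : sgraph) (X : {pred F}) (H : sgraph) : Prop :=
  exists f : H -> F, [/\ injective f, forall x, f x \in X &
                          forall x y, adj x y -> adj (f x) (f y)].

Definition varrow (G : sgraph) (r : nat) (Hs : 'I_r -> sgraph) : Prop :=
  forall col : G -> 'I_r,
    exists i : 'I_r, contains_in [pred x | col x == i] (Hs i).

From mathcomp Require Import all_boot.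
From Stdlib Require Import ClassicalEpsilon.

Set Implicit Arguments.
Unset Strict Implicit.
Unset Printing Implicit Defensive.

(* Colour each vertex g of G by a colour i whose class inside the copy
   {g} x H contains H_i.  The arrow property of G yields a colour i and a
   copy of F_i in G all of whose vertices g carry colour i; replacing each
   vertex of that copy by the corresponding copy of H_i in {g} x H gives a
   copy of F_i[H_i] of colour i in G[H]. *)

Lemma contains_in_lexprod (G H F K : sgraph) (X : {pred lexprod G H})
    (phi : F -> G) :
  injective phi -> (forall x y, adj x y -> adj (phi x) (phi y)) ->
  (forall x, contains_in [pred y | (phi x, y) \in X] K) ->
  contains_in X (lexprod F K).
Proof.
move=> phiI phiE /choice[f fP].
exists (fun u => (phi u.1, f u.1 u.2)); split.
- move=> [x y] [x' y'] /= [/phiI exx']; subst x'.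
  by have [fI _ _] := fP x; move=> /fI ->.
- by move=> [x y]; have [_ fX _] := fP x; have := fX y; rewrite inE.
- move=> [x y] [x' y']; rewrite /= /lexadj /=.
  case/orP=> [/phiE -> // | /andP[/eqP exx' adj_yy']]; subst x'.
  by have [_ _ fE] := fP x; rewrite eqxx fE ?orbT.
Qed.

Lemma varrow_fibre_colouring (G H : sgraph) (r : nat) (Hs : 'I_r -> sgraph)
    (col : lexprod G H -> 'I_r) :
  varrow H Hs ->
  exists c : G -> 'I_r,
    forall g, contains_in [pred y | col (g, y) == c g] (Hs (c g)).
Proof.
move=> hH; apply: (choice (fun g i =>
  contains_in [pred y | col (g, y) == i] (Hs i))) => g.
exact: hH (fun y => col (g, y)).
Qed.

Lemma varrow_lexprod (G H : sgraph) (r : nat) (Fs Hs : 'I_r -> sgraph) :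
  varrow G Fs -> varrow H Hs ->
  varrow (lexprod G H) (fun i => lexprod (Fs i) (Hs i)).
Proof.
move=> hG hH col.
have [c cP] := varrow_fibre_colouring col hH.
have [i [phi [phiI phiC phiE]]] := hG c.
exists i; apply: contains_in_lexprod phiI phiE _ => x.
by have := phiC x; rewrite inE => /eqP <-; apply: cP.
Qed.

Theorem mainTheorem1 (r : nat) (a : 'I_r -> nat) (G H : sgraph)
    (Hs : 'I_r -> sgraph) :
  1 <= r ->
  (forall i, 2 <= a i) ->
  varrow G (fun i => complete (a i)) ->
  varrow H Hs ->
  varrow (lexprod G H) (fun i => lexprod (complete (a i)) (Hs i)).
Proof. by move=> _ _; apply: varrow_lexprod. Qed.
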